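(* Let $n\ge1$, let $\alpha_0,\ldots,\alpha_{2n+1}\in\mathbb{C}$ with $\sum_{i=0}^{2n+1}\alpha_i=1$, and assume \[ \alpha_{2i}^{2j-1}\notin\mathbb{Z},\quad \sum_{i=0}^n\alpha_{2i+1}\notin\mathbb{Z},\quad \alpha_{2i-1}^{2j-1}\notin\mathbb{Z}\qquad(i=1,\ldots,n,\ j=1,\ldots,n-i+1). \] Suppose $\mathbf{x}={}^t(x_0,\ldots,x_n)$ satisfies \[ \frac{d\mathbf{x}}{dt}=\Big(\frac{A_0}{t}+\frac{A_1}{1-t}\Big)\mathbf{x},\qquad A_0=\sum_{i=0}^{n-1}\big(-\alpha_{2i+2}^{2n-2i-1}\big)E_{i,i}+\sum_{i=0}^{n-1}\sum_{j=i+1}^{n}\alpha_{2j+1}E_{i,j},\quad A_1=\sum_{i=0}^{n}\sum_{j=0}^{n}\alpha_{2j+1}E_{i,j}. \] Then for each $i=0,\ldots,n$, the component $x=x_i$ satisfies the generalized hypergeometric equation \[ \big[\delta(\delta+b_1-1)\cdots(\delta+b_n-1)-t(\delta+a_0)(\delta+a_1)\cdots(\delta+a_n)\big]x=0,\qquad \delta=t\frac{d}{dt}, \] with $a_0=\alpha_1^{2n}$; $a_j=1+\alpha_{2n-2j+3}^{2j-2}$, $b_j=1+\alpha_{2n-2j+2}^{2j-1}$ for $j=1,\ldots,n-i$; and $a_j=\alpha_{2n-2j+3}^{2j-2}$, $b_j=\alpha_{2n-2j+2}^{2j-1}$ for $j=n-i+1,\ldots,n$.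
   Context: Indices of the parameters $\alpha_i$ are taken modulo $2n+2$. For integers $k,l$, $\alpha_k^l=0$ if $l<0$ and $\alpha_k^l=\sum_{i=k}^{k+l}\alpha_i$ if $l\ge0$. $E_{i,j}=(\delta_{i,k}\delta_{j,l})_{k,l=0}^{n}$ is the $(n+1)\times(n+1)$ matrix unit. *)

From HB Require Import structures.
From mathcomp Require Import all_boot all_order all_algebra.
From mathcomp Require Import all_classical all_reals all_analysis.
From mathcomp Require Import complex.
Set Implicit Arguments. Unset Strict Implicit. Unset Printing Implicit Defensive.
Import Order.TTheory GRing.Theory Num.Theory.
Import numFieldNormedType.Exports.
Local Open Scope ring_scope.

Definition Cplx (R : realType) : numClosedFieldType := R[i].

Definition is_intC (C : numClosedFieldType) (z : C) : Prop :=
  exists m : int, z = m%:~R.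

(* alpha : indexed by 'I_(2n+2); indices are taken modulo 2n+2. *)
Definition alph (C : numClosedFieldType) (n : nat) (al : 'I_(n.*2.+2) -> C)
  (k : nat) : C := al (inord (k %% n.*2.+2)).

(* alpha_k^l = sum_{i=k}^{k+l} alpha_i  (l >= 0; all the l used below are
   nonnegative). *)
Definition asum (C : numClosedFieldType) (n : nat) (al : 'I_(n.*2.+2) -> C)
  (k l : nat) : C := \sum_(k <= i < k + l + 1) alph al i.

Definition matA0 (C : numClosedFieldType) (n : nat) (al : 'I_(n.*2.+2) -> C)
  : 'M[C]_(n.+1) :=
  \matrix_(i < n.+1, j < n.+1)
    ((if (i == j) && (i < n)%N then - asum al (i.*2 + 2) (n.*2 - i.*2 - 1)
      else 0)
     + (if (i < n)%N && (i < j)%N then alph al (j.*2 + 1) else 0)).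

Definition matA1 (C : numClosedFieldType) (n : nat) (al : 'I_(n.*2.+2) -> C)
  : 'M[C]_(n.+1) :=
  \matrix_(i < n.+1, j < n.+1) alph al (j.*2 + 1).

Definition delta_plus (C : numClosedFieldType) (c : C) (f : C -> C) : C -> C :=
  fun t => t * derive1 f t + c * f t.

Definition delta_prod (C : numClosedFieldType) (cs : seq C) (f : C -> C)
  : C -> C := foldr (@delta_plus C) f cs.

Definition hyp_a (C : numClosedFieldType) (n : nat) (al : 'I_(n.*2.+2) -> C)
  (i j : nat) : C :=
  if j == 0%N then asum al 1 n.*2
  else if (j <= n - i)%N then 1 + asum al (n.*2 - j.*2 + 3) (j.*2 - 2)
  else asum al (n.*2 - j.*2 + 3) (j.*2 - 2).

Definition hyp_b (C : numClosedFieldType) (n : nat) (al : 'I_(n.*2.+2) -> C)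
  (i j : nat) : C :=
  if (j <= n - i)%N then 1 + asum al (n.*2 - j.*2 + 2) (j.*2 - 1)
  else asum al (n.*2 - j.*2 + 2) (j.*2 - 1).

Definition hyp_op (C : numClosedFieldType) (n : nat) (al : 'I_(n.*2.+2) -> C)
  (i : nat) (x : C -> C) (t : C) : C :=
  delta_prod (0 :: [seq hyp_b al i j - 1 | j <- iota 1 n]) x t
  - t * delta_prod [seq hyp_a al i j | j <- iota 0 n.+1] x t.

From HB Require Import structures.
From mathcomp Require Import all_boot all_order all_algebra.
From mathcomp Require Import all_classical all_reals all_analysis.
From mathcomp Require Import complex.
From mathcomp Require Import ring zify.
Import Order.TTheory GRing.Theory Num.Theory.
Import numFieldNormedType.Exports.
Local Open Scope ring_scope.

(* With delta = t d/dt, row i < n of the system says that (delta + beta_i) x_i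
   and (delta + alpha_(2i+3)^(2n-2i-2)) x_(i+1) both equal
   sum_(l > i) alpha_(2l+1) x_l + t/(1-t) sum_l alpha_(2l+1) x_l,
   where beta_i = alpha_(2i+2)^(2n-2i-1) is minus the i-th diagonal entry of
   A_0; row n gives delta x_n = t (delta + alpha_1^(2n)) x_0.  The operators
   delta + c commute and satisfy (delta + c) t = t (delta + c + 1), so chaining
   these relations from x_i up to x_n, through x_0 and back up to x_i, shows
   that the hypergeometric operator annihilates x_i.  No regularity beyond
   differentiability is assumed: x' is a rational combination of x, hence all
   iterated derivatives exist. *)

Set Implicit Arguments.
Unset Strict Implicit.

Section DeltaCalculus.
Variables (R : realType) (U : set (Cplx R)).
Local Notation C := (Cplx R).
Hypothesis openU : open U.

Definition eq_on (f g : C -> C) := forall t, U t -> f t = g t.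

Lemma eq_on_trans f g h : eq_on f g -> eq_on g h -> eq_on f h.
Proof. by move=> fg gh t Ut; rewrite fg ?gh. Qed.

Lemma eq_on_near f g t : U t -> eq_on f g -> {near t, f =1 g}.
Proof.
move=> Ut fg; have : nbhs t U by apply: open_nbhs_nbhs.
by apply: filterS => s /fg.
Qed.

Lemma derive1_eq_on f g : eq_on f g -> eq_on (derive1 f) (derive1 g).
Proof.
move=> fg t Ut; rewrite !derive1E; apply: near_eq_derive.
by have := eq_on_near Ut fg; apply: filterS.
Qed.

Lemma delta_plus_eq_on c f g : eq_on f g -> eq_on (delta_plus c f) (delta_plus c g).
Proof. by move=> fg t Ut; rewrite /delta_plus (derive1_eq_on fg Ut) fg. Qed.

Lemma delta_prod_eq_on (s : seq C) f g : eq_on f g -> eq_on (delta_prod s f) (delta_prod s g).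
Proof. by move=> fg; elim: s => //= c s IH; apply: delta_plus_eq_on. Qed.

Lemma delta_prod_cat (s1 s2 : seq C) f :
  delta_prod (s1 ++ s2) f = delta_prod s1 (delta_prod s2 f).
Proof. exact: foldr_cat. Qed.

Lemma delta_prod_rcons (s : seq C) c f :
  delta_prod (rcons s c) f = delta_prod s (delta_plus c f).
Proof. by rewrite -cats1 delta_prod_cat. Qed.

Lemma delta_plusD (c d : C) f t : delta_plus (c + d) f t = delta_plus d f t + c * f t.
Proof. by rewrite /delta_plus mulrDl [c * _ + _]addrC addrA. Qed.

Variables (I : Type) (x : I -> C -> C).

(* Once the derivative of each [x k] lies in this class, every member is
   differentiable on [U] with derivative again in the class ([gen_smooth]):
   this is the regularity needed to compose the operators [delta_plus]. *)
Inductive gen : (C -> C) -> Prop :=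
| gen_x k : gen (x k)
| gen_cst (c : C) : gen (fun _ => c)
| gen_id : gen id
| gen_inv f : gen f -> (forall t, U t -> f t != 0) -> gen (fun t => (f t)^-1)
| gen_add f g : gen f -> gen g -> gen (fun t => f t + g t)
| gen_mul f g : gen f -> gen g -> gen (fun t => f t * g t)
| gen_eq_on f g : gen f -> eq_on f g -> gen g.

Local Hint Resolve gen_x gen_cst gen_id : core.

Hypothesis x_smooth :
  forall k, (forall t, U t -> derivable (x k) t 1) /\ gen (derive1 (x k)).

Lemma gen_smooth f : gen f -> (forall t, U t -> derivable f t 1) /\ gen (derive1 f).
Proof.
elim=> {f} [k | c | | f Gf [df Gf'] f_neq0 | f g _ [df Gf'] _ [dg Gg']
           | f g Gf [df Gf'] Gg [dg Gg'] | f g _ [df Gf'] fg].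
- exact: x_smooth.
- split=> [t _|]; first exact: derivable_cst.
  by apply: (gen_eq_on (gen_cst 0)) => t _; rewrite derive1E derive_cst.
- split=> [t _|]; first exact: derivable_id.
  by apply: (gen_eq_on (gen_cst 1)) => t _; rewrite derive1E derive_id.
- split=> [t Ut|]; first exact: derivableV (f_neq0 t Ut) (df t Ut).
  apply: (gen_eq_on (f := fun t => (- 1) * (f t)^-1 * (f t)^-1 * derive1 f t)).
    have Gf1 := gen_inv Gf f_neq0.
    exact: gen_mul (gen_mul (gen_mul (gen_cst _) Gf1) Gf1) Gf'.
  move=> t Ut; rewrite [RHS]derive1E (deriveV (f_neq0 t Ut) (df t Ut)) -derive1E.
  by rewrite /GRing.scale /= expr2 invfM mulN1r !mulNr.
- split=> [t Ut|]; first exact: derivableD (df t Ut) (dg t Ut).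
  apply: (gen_eq_on (gen_add Gf' Gg')) => t Ut.
  by rewrite [RHS]derive1E (deriveD (df t Ut) (dg t Ut)) -!derive1E.
- split=> [t Ut|]; first exact: derivableM (df t Ut) (dg t Ut).
  apply: (gen_eq_on (gen_add (gen_mul Gf Gg') (gen_mul Gg Gf'))) => t Ut.
  by rewrite [RHS]derive1E (deriveM (df t Ut) (dg t Ut)) -!derive1E.
- split=> [t Ut|]; first exact: near_eq_derivable (eq_on_near Ut fg) (df t Ut).
  exact: gen_eq_on Gf' (derive1_eq_on fg).
Qed.

Lemma gen_derivable f t : gen f -> U t -> derivable f t 1.
Proof. by move=> Gf; apply: (gen_smooth Gf).1. Qed.

Lemma gen_derive1 f : gen f -> gen (derive1 f).
Proof. by move=> Gf; apply: (gen_smooth Gf).2. Qed.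

Lemma gen_sum (J : Type) (r : seq J) (F : J -> C -> C) :
  (forall j, gen (F j)) -> gen (fun t => \sum_(j <- r) F j t).
Proof.
move=> GF; elim: r => [|j r IH].
  by apply: (gen_eq_on (gen_cst 0)) => t _; rewrite big_nil.
by apply: (gen_eq_on (gen_add (GF j) IH)) => t _; rewrite big_cons.
Qed.

Lemma gen_delta_plus c f : gen f -> gen (delta_plus c f).
Proof.
by move=> Gf; apply: gen_add; apply: gen_mul => //; exact: gen_derive1.
Qed.

Lemma gen_delta_prod (s : seq C) f : gen f -> gen (delta_prod s f).
Proof. by move=> Gf; elim: s => //= c s; apply: gen_delta_plus. Qed.

Lemma derive1_add f g t : gen f -> gen g -> U t ->
  derive1 (fun t => f t + g t) t = derive1 f t + derive1 g t.
Proof.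
move=> Gf Gg Ut; rewrite derive1E.
by rewrite (deriveD (gen_derivable Gf Ut) (gen_derivable Gg Ut)) -!derive1E.
Qed.

Lemma derive1_mul f g t : gen f -> gen g -> U t ->
  derive1 (fun t => f t * g t) t = f t * derive1 g t + g t * derive1 f t.
Proof.
move=> Gf Gg Ut; rewrite derive1E.
by rewrite (deriveM (gen_derivable Gf Ut) (gen_derivable Gg Ut)) -!derive1E.
Qed.

Lemma derive1_delta_plus c f t : gen f -> U t ->
  derive1 (delta_plus c f) t =
  derive1 f t + t * derive1 (derive1 f) t + c * derive1 f t.
Proof.
move=> Gf Ut; have Gf' := gen_derive1 Gf.
rewrite /delta_plus derive1_add ?derive1_mul //; try exact: gen_mul.
rewrite [derive1 id t]derive1E [derive1 (fun=> c) t]derive1E derive_id derive_cst.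
by move: (derive1 f t) (derive1 (derive1 f) t) => f1 f2; ring.
Qed.

Lemma delta_plusC a b f : gen f ->
  eq_on (delta_plus a (delta_plus b f)) (delta_plus b (delta_plus a f)).
Proof.
move=> Gf t Ut; rewrite {1}/delta_plus derive1_delta_plus // [in RHS]/delta_plus.
rewrite derive1_delta_plus // /delta_plus.
by move: (f t) (derive1 f t) (derive1 (derive1 f) t) => f0 f1 f2; ring.
Qed.

Lemma delta_prod_plus (s : seq C) c f : gen f ->
  eq_on (delta_prod s (delta_plus c f)) (delta_plus c (delta_prod s f)).
Proof.
move=> Gf; elim: s => [|a s IH] //= t Ut.
rewrite (delta_plus_eq_on a IH Ut); exact: delta_plusC _ _ (gen_delta_prod s Gf) _ Ut.
Qed.

Lemma delta_prodC (s1 s2 : seq C) f : gen f ->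
  eq_on (delta_prod s1 (delta_prod s2 f)) (delta_prod s2 (delta_prod s1 f)).
Proof.
move=> Gf; elim: s2 => [|a s2 IH] //= t Ut.
rewrite (delta_prod_plus _ _ (gen_delta_prod s2 Gf) Ut).
exact: (delta_plus_eq_on a IH Ut).
Qed.

Lemma delta_prod_perm (s1 s2 : seq C) f : perm_eq s1 s2 -> gen f ->
  eq_on (delta_prod s1 f) (delta_prod s2 f).
Proof.
move=> s12 Gf; apply: (catCA_perm_ind (P := fun s => eq_on _ (delta_prod s f))) s12 _ => //.
move=> r1 r2 r3 e1; apply: (eq_on_trans e1); rewrite !delta_prod_cat.
exact: delta_prodC (gen_delta_prod r3 Gf).
Qed.

Lemma delta_plus_mulX c g : gen g ->
  eq_on (delta_plus c (fun t => t * g t)) (fun t => t * delta_plus (c + 1) g t).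
Proof.
move=> Gg t Ut; rewrite /delta_plus derive1_mul // [derive1 id t]derive1E derive_id.
by move: (g t) (derive1 g t) => g0 g1; ring.
Qed.

Lemma delta_prod_mulX (s : seq C) g : gen g ->
  eq_on (delta_prod s (fun t => t * g t))
        (fun t => t * delta_prod [seq c + 1 | c <- s] g t).
Proof.
move=> Gg; elim: s => [|c s IH] //= t Ut.
rewrite (delta_plus_eq_on c IH Ut); exact: delta_plus_mulX _ (gen_delta_prod _ Gg) _ Ut.
Qed.

Lemma delta_prod_intertwine (p q : nat -> C) (y : nat -> C -> C) a m :
  (forall i, gen (y i)) ->
  (forall i, (a <= i < a + m)%N ->
     eq_on (delta_plus (p i) (y i)) (delta_plus (q i) (y i.+1))) ->
  eq_on (delta_prod (map p (iota a m)) (y a))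
        (delta_prod (map q (iota a m)) (y (a + m)%N)).
Proof.
move=> Gy; elim: m a => [|m IH] a pq t Ut /=; first by rewrite addn0.
rewrite -(delta_prod_plus _ _ (Gy a) Ut).
rewrite (delta_prod_eq_on _ (pq a _) Ut); last by rewrite leqnn addnS ltnS leq_addr.
rewrite (delta_prod_plus _ _ (Gy a.+1) Ut) addnS -addSn.
apply: delta_plus_eq_on (IH _ _) t Ut => i /andP[ai im].
by apply: pq; lia.
Qed.
End DeltaCalculus.

Section HypergeometricSystem.
Variables (R : realType) (n : nat) (al : 'I_(n.*2.+2) -> Cplx R).
Local Notation C := (Cplx R).

Definition alpha_odd (l : nat) : C := alph al (l.*2 + 1).

Definition diag_A0 (i : nat) : C :=
  if (i < n)%N then asum al (i.*2 + 2) (n.*2 - i.*2 - 1) else 0.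

Definition alpha_from (i : nat) : C := asum al (i.*2 + 1) (n.*2 - i.*2).

Lemma alpha_fromE i : (i <= n)%N -> alpha_from i = alpha_odd i + diag_A0 i.
Proof.
rewrite /alpha_from /diag_A0 /asum leq_eqVlt => /orP[/eqP-> | lt_in].
  rewrite ltnn subnn addn0 addr0 !addn1.
  by rewrite big_nat1 /alpha_odd addn1.
rewrite lt_in big_ltn; last by rewrite -!muln2; lia.
congr (_ + _); congr (\sum_(_ <= _ < _) _); rewrite -!muln2; lia.
Qed.

Lemma perm_iota_rev m : perm_eq (iota 1 m) [seq (m - i)%N | i <- iota 0 m].
Proof.
apply: uniq_perm; first exact: iota_uniq.
  by rewrite map_inj_in_uniq ?iota_uniq // => i j; rewrite !mem_iota; lia.
move=> j; rewrite mem_iota; apply/idP/mapP => [j_in | [i i_in ->]].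
  by exists (m - j)%N; rewrite ?mem_iota; lia.
by move: i_in; rewrite mem_iota; lia.
Qed.

Lemma iota_split k : (k <= n)%N -> iota 0 n = iota 0 k ++ iota k (n - k).
Proof. by move=> kn; rewrite -iotaD subnKC. Qed.

Lemma hyp_b_rev k i : (i < n)%N ->
  hyp_b al k (n - i) - 1 = if (k <= i)%N then diag_A0 i else diag_A0 i - 1.
Proof.
move=> lt_in; rewrite /hyp_b /diag_A0 lt_in.
have -> : asum al (n.*2 - (n - i).*2 + 2) ((n - i).*2 - 1) =
          asum al (i.*2 + 2) (n.*2 - i.*2 - 1) by congr asum; rewrite -!muln2; lia.
have -> : (n - i <= n - k)%N = (k <= i)%N by apply/idP/idP; lia.
by case: (k <= i)%N; rewrite // [1 + _]addrC addrK.
Qed.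

Lemma hyp_a_rev k i : (i < n)%N ->
  hyp_a al k (n - i) = if (k <= i)%N then alpha_from i.+1 + 1 else alpha_from i.+1.
Proof.
move=> lt_in; rewrite /hyp_a /alpha_from subn_eq0 leqNgt lt_in /=.
have -> : asum al (n.*2 - (n - i).*2 + 3) ((n - i).*2 - 2) =
          asum al (i.+1.*2 + 1) (n.*2 - i.+1.*2) by congr asum; rewrite -!muln2; lia.
have -> : (n - i <= n - k)%N = (k <= i)%N by apply/idP/idP; lia.
by case: (k <= i)%N; rewrite // addrC.
Qed.

Lemma hyp_a0 k : hyp_a al k 0 = alpha_from 0.
Proof. by rewrite /hyp_a /alpha_from subn0. Qed.

Lemma hyp_b_perm k : (k <= n)%N ->
  perm_eq (0 :: [seq hyp_b al k j - 1 | j <- iota 1 n])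
          ([seq diag_A0 i - 1 | i <- iota 0 k] ++
           0 :: [seq diag_A0 i | i <- iota k (n - k)]).
Proof.
move=> kn; rewrite perm_sym (perm_catCA _ [:: 0]) perm_cons perm_sym.
apply: perm_trans (perm_map _ (perm_iota_rev n)) _.
rewrite -map_comp (iota_split kn) map_cat.
rewrite (eq_in_map _ (fun i => diag_A0 i - 1) (iota 0 k)).1
        ?(eq_in_map _ diag_A0 (iota k (n - k))).1 //.
all: move=> i; rewrite mem_iota => /andP[? ?] /=.
all: by rewrite hyp_b_rev; [case: leqP => //; lia | lia].
Qed.

Lemma hyp_a_perm k : (k <= n)%N ->
  perm_eq [seq hyp_a al k j | j <- iota 0 n.+1]
          ([seq alpha_from i.+1 + 1 | i <- iota k (n - k)] ++
           alpha_from 0 :: [seq alpha_from i.+1 | i <- iota 0 k]).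
Proof.
move=> kn; rewrite perm_sym -(perm_catCA [:: alpha_from 0]) /= hyp_a0 perm_cons.
rewrite perm_catC perm_sym.
apply: perm_trans (perm_map _ (perm_iota_rev n)) _.
rewrite -map_comp (iota_split kn) map_cat.
rewrite (eq_in_map _ (fun i => alpha_from i.+1) (iota 0 k)).1
        ?(eq_in_map _ (fun i => alpha_from i.+1 + 1) (iota k (n - k))).1 //.
all: move=> i; rewrite mem_iota => /andP[? ?] /=.
all: by rewrite hyp_a_rev; [case: leqP => //; lia | lia].
Qed.

Variables (U : set C) (x : 'I_n.+1 -> C -> C).
Hypotheses (openU : open U) (U_neq0 : ~ U 0) (U_neq1 : ~ U 1).
Hypothesis ode : forall t, U t -> forall k : 'I_n.+1,
  derivable (x k) t 1 /\
  derive1 (x k) t =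
    \sum_(l < n.+1) ((matA0 al k l / t + matA1 al k l / (1 - t)) * x l t).

Local Notation gen := (gen U x).

Lemma neq0_on_U t : U t -> t != 0.
Proof. by move=> Ut; apply: contraPneq U_neq0 => <-. Qed.

Lemma subr_neq0_on_U t : U t -> 1 - t != 0.
Proof. by move=> Ut; rewrite subr_eq0; apply: contraPneq U_neq1 => ->. Qed.

Lemma ode_x_smooth k : (forall t, U t -> derivable (x k) t 1) /\ gen (derive1 (x k)).
Proof.
split=> [t Ut|]; first exact: (ode Ut k).1.
have G1t : gen (fun t => 1 - t).
  apply: (gen_eq_on (gen_add (gen_cst _ _ 1) (gen_mul (gen_cst _ _ (-1)) (gen_id _ _)))).
  by move=> t _; rewrite mulN1r.
have Gsum : gen (fun t => \sum_(l < n.+1)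
                 ((matA0 al k l / t + matA1 al k l / (1 - t)) * x l t)).
  apply: gen_sum => l; apply: gen_mul (gen_x _ _ _).
  apply: gen_add; apply: gen_mul (gen_cst _ _ _) _.
    exact: gen_inv (gen_id _ _) neq0_on_U.
  exact: gen_inv G1t subr_neq0_on_U.
by apply: gen_eq_on Gsum _ => t Ut; rewrite (ode Ut k).2.
Qed.

Definition comp (m : nat) : C -> C := x (inord m).

Definition tail (i : nat) (t : C) : C :=
  \sum_(l < n.+1 | (i <= l)%N) alpha_odd l * x l t.

Lemma tail_rec i t : (i <= n)%N -> tail i t = alpha_odd i * comp i t + tail i.+1 t.
Proof.
move=> le_in; rewrite /tail (bigD1 (inord i)) /= ?inordK //; congr (_ + _).
by apply: eq_bigl => l; rewrite -(inj_eq val_inj) /= inordK // ltn_neqAle eq_sym andbC.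
Qed.

Lemma tail_over t : tail n.+1 t = 0.
Proof. by rewrite /tail big_pred0 // => l; rewrite leqNgt ltn_ord. Qed.

Lemma mul_t_derive1 k t : U t ->
  t * derive1 (x k) t = \sum_(l < n.+1) matA0 al k l * x l t
                        + t / (1 - t) * \sum_(l < n.+1) matA1 al k l * x l t.
Proof.
move=> Ut; rewrite (ode Ut k).2 !mulr_sumr -big_split; apply: eq_bigr => l _ /=.
move: (matA0 al k l) (matA1 al k l) (x l t) => a b y.
by field; rewrite subr_neq0_on_U ?neq0_on_U.
Qed.

Lemma matA0_row i t : (i <= n)%N ->
  \sum_(l < n.+1) matA0 al (inord i) l * x l t = - diag_A0 i * comp i t + tail i.+1 t.
Proof.
move=> le_in; under eq_bigr => l _ do rewrite mxE inordK // mulrDl.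
rewrite big_split /= (bigD1 (inord i)) //= eqxx big1 ?addr0; last first.
  by move=> l /negbTE; rewrite eq_sym => ->; rewrite mul0r.
congr (_ + _).
  by rewrite /diag_A0; case: ltnP => //= _; rewrite oppr0.
rewrite /tail [RHS]big_mkcond; apply: eq_bigr => l _ /=.
have := ltn_ord l; case: (ltnP i l) => [lt_il | _] lt_ln; last by rewrite andbF mul0r.
by rewrite ifT //; lia.
Qed.

Lemma matA1_row k t : \sum_(l < n.+1) matA1 al k l * x l t = tail 0 t.
Proof. by apply: eq_bigr => l _; rewrite mxE. Qed.

Lemma delta_plus_diag_comp i t : (i <= n)%N -> U t ->
  delta_plus (diag_A0 i) (comp i) t = tail i.+1 t + t / (1 - t) * tail 0 t.
Proof.
move=> le_in Ut; rewrite /delta_plus mul_t_derive1 // matA0_row // matA1_row.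
by rewrite mulNr; move: (diag_A0 i * _) (tail _ t) (_ / _ * _) => a b c; ring.
Qed.

Lemma delta_plus_from_comp i t : (i <= n)%N -> U t ->
  delta_plus (alpha_from i) (comp i) t = tail i t + t / (1 - t) * tail 0 t.
Proof.
move=> le_in Ut; rewrite alpha_fromE // delta_plusD delta_plus_diag_comp //.
by rewrite [tail i t](tail_rec _ le_in) addrC addrA.
Qed.

Lemma comp_intertwine i : (i < n)%N ->
  eq_on U (delta_plus (diag_A0 i) (comp i)) (delta_plus (alpha_from i.+1) (comp i.+1)).
Proof. by move=> lt_in t Ut; rewrite delta_plus_diag_comp ?delta_plus_from_comp // ltnW. Qed.

Lemma delta_last_comp :
  eq_on U (delta_plus 0 (comp n)) (fun t => t * delta_plus (alpha_from 0) (comp 0) t).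
Proof.
move=> t Ut; have := delta_plus_diag_comp (leqnn n) Ut; rewrite /diag_A0 ltnn => ->.
rewrite delta_plus_from_comp // tail_over add0r.
by move: (tail 0 t) => T; field; apply: subr_neq0_on_U.
Qed.

Lemma comp_chain a m : (a + m <= n)%N ->
  eq_on U (delta_prod [seq diag_A0 i | i <- iota a m] (comp a))
          (delta_prod [seq alpha_from i.+1 | i <- iota a m] (comp (a + m))).
Proof.
move=> amn; apply: (delta_prod_intertwine openU ode_x_smooth) => [i | i /andP[_ lt_i]].
  exact: gen_x.
by apply: comp_intertwine; lia.
Qed.

Lemma hyp_op_comp k t : (k <= n)%N -> U t -> hyp_op al k (comp k) t = 0.
Proof.
move=> kn Ut; apply/eqP; rewrite subr_eq0; apply/eqP.
have gen_comp m : gen (comp m) by apply: gen_x.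
have dp_perm := delta_prod_perm openU ode_x_smooth.
rewrite (dp_perm _ _ _ (hyp_b_perm kn) (gen_comp k) _ Ut).
rewrite (dp_perm _ _ _ (hyp_a_perm kn) (gen_comp k) _ Ut).
set P := [seq diag_A0 i | i <- iota k (n - k)].
set Q := [seq alpha_from i.+1 | i <- iota k (n - k)].
set P' := [seq diag_A0 i | i <- iota 0 k].
set Q' := [seq alpha_from i.+1 | i <- iota 0 k].
set Q1 := [seq alpha_from i.+1 + 1 | i <- iota k (n - k)].
have up : eq_on U (delta_prod P (comp k)) (delta_prod Q (comp n)).
  by have := @comp_chain k (n - k); rewrite subnKC //; apply.
have low : eq_on U (delta_prod P' (comp 0)) (delta_prod Q' (comp k)).
  exact: comp_chain.
rewrite delta_prod_cat /= (delta_prod_eq_on openU _ (delta_plus_eq_on openU 0 up) Ut).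
rewrite -(delta_prod_eq_on openU _ (delta_prod_plus openU ode_x_smooth Q 0 (gen_comp n)) Ut).
rewrite (delta_prod_eq_on openU _ (delta_prod_eq_on openU Q delta_last_comp) Ut).
rewrite -delta_prod_cat.
have gen_last := gen_delta_plus openU ode_x_smooth (alpha_from 0) (gen_comp 0).
rewrite (delta_prod_mulX openU ode_x_smooth _ gen_last Ut).
congr (t * _).
have -> : [seq c + 1 | c <- [seq diag_A0 i - 1 | i <- iota 0 k] ++ Q] = P' ++ Q1.
  by rewrite map_cat -!map_comp; congr (_ ++ _); apply: eq_map => i /=; rewrite subrK.
rewrite -delta_prod_rcons (dp_perm _ ((Q1 ++ [:: alpha_from 0]) ++ P') _ _ (gen_comp 0) _ Ut);
  last by rewrite -cats1 -catA perm_catC.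
by rewrite delta_prod_cat (delta_prod_eq_on openU _ low Ut) -delta_prod_cat -catA.
Qed.
End HypergeometricSystem.

Unset Implicit Arguments.

Theorem corollary3p2 (R : realType) (n : nat) (al : 'I_(n.*2.+2) -> Cplx R)
  (U : set (Cplx R)) (x : 'I_n.+1 -> Cplx R -> Cplx R) :
  (1 <= n)%N ->
  \sum_(k < n.*2.+2) al k = 1 ->
  (forall i j : nat, (1 <= i <= n)%N -> (1 <= j <= n - i + 1)%N ->
     ~ is_intC (asum al i.*2 (j.*2 - 1))) ->
  ~ is_intC (\sum_(0 <= k < n.+1) alph al (k.*2 + 1)) ->
  (forall i j : nat, (1 <= i <= n)%N -> (1 <= j <= n - i + 1)%N ->
     ~ is_intC (asum al (i.*2 - 1) (j.*2 - 1))) ->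
  open U -> ~ U 0 -> ~ U 1 ->
  (forall t, U t -> forall k : 'I_n.+1,
     derivable (x k) t 1 /\
     derive1 (x k) t =
       \sum_(l < n.+1) ((matA0 al k l / t + matA1 al k l / (1 - t)) * x l t)) ->
  forall (k : 'I_n.+1) t, U t -> hyp_op al k (x k) t = 0.
Proof.
move=> _ _ _ _ _ openU U_neq0 U_neq1 ode k t Ut.
by have := hyp_op_comp openU U_neq0 U_neq1 ode (ltn_ord k) Ut; rewrite /comp inord_val.
Qed.
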